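(* For any positive integer $k$ and integers $n_1,\dots,n_k>1$, \[\mathrm{mur}\Big(\bigcup_{i=1}^k K_{n_i}\Big)=\mathrm{mur}(K_{n_1,\dots,n_k})=k-1,\] where $\bigcup_{i=1}^k K_{n_i}$ is the vertex-disjoint union of complete graphs on $n_1,\dots,n_k$ vertices and $K_{n_1,\dots,n_k}$ is the complete multipartite graph with parts of sizes $n_1,\dots,n_k$.
   Context: For a finite simple undirected graph $G$ on vertices $v_1,\dots,v_n$, let $A_G$ be its $(0,1)$-adjacency matrix, $D_G=\mathrm{diag}(d_1,\dots,d_n)$ with $d_i$ the degree of $v_i$, $I$ the $n\times n$ identity matrix and $J$ the $n\times n$ all-ones matrix. A universal adjacency matrix of $G$ is any matrix $\alpha A_G+\beta I+\gamma J+\delta D_G$ with real scalars $\alpha,\beta,\gamma,\delta$ and $\alpha\neq 0$. The minimum universal rank $\mathrm{mur}(G)$ is the minimum rank over all universal adjacency matrices of $G$. *)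

From HB Require Import structures.
From mathcomp Require Import all_boot all_order all_algebra.
From mathcomp Require Import reals.
Set Implicit Arguments. Unset Strict Implicit. Unset Printing Implicit Defensive.
Import Order.TTheory GRing.Theory Num.Theory.
Local Open Scope ring_scope.

Definition simple_graph (N : nat) (e : rel 'I_N) : Prop :=
  (forall i j, e i j = e j i) /\ (forall i, e i i = false).

Section UA.
Variable R : realType.

Definition adjmx (N : nat) (e : rel 'I_N) : 'M[R]_N :=
  \matrix_(i, j) (e i j)%:R.

Definition degmx (N : nat) (e : rel 'I_N) : 'M[R]_N :=
  diag_mx (\row_i (#|[set j | e i j]|)%:R).

Definition univ_adjmx (N : nat) (e : rel 'I_N) (a b c d : R) : 'M[R]_N :=
  a *: adjmx e + b%:M + c *: const_mx 1 + d *: degmx e.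

Definition mur_eq (N : nat) (e : rel 'I_N) (r : nat) : Prop :=
  (exists a b c d : R, a != 0 /\ \rank (univ_adjmx e a b c d) = r) /\
  (forall a b c d : R, a != 0 -> (r <= \rank (univ_adjmx e a b c d))%N).
End UA.

Definition union_cliques (N k : nat) (p : 'I_N -> 'I_k) : rel 'I_N :=
  fun u v => (u != v) && (p u == p v).
Definition complete_multipartite (N k : nat) (p : 'I_N -> 'I_k) : rel 'I_N :=
  fun u v => p u != p v.

(* Both graphs are blow-ups of the k-vertex complete graph: with suitable
   coefficients their universal adjacency matrix is P (I - J/k) P^T, where P
   maps each vertex to its part, so its rank is at most rank (I - J/k) = k - 1.
   Conversely, choosing two distinct vertices r_i, s_i in every part, the
   submatrix on rows r and columns s avoids the diagonal, so it only sees
   alpha A + gamma J; it is x I + t J with x = alpha (cliques) or x = -alpha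
   (multipartite), and removing the rank-one part t J leaves rank k. *)
From HB Require Import structures.
From mathcomp Require Import all_boot all_order all_algebra.
From mathcomp Require Import reals.
From mathcomp Require Import ring zify.
Set Implicit Arguments. Unset Strict Implicit. Unset Printing Implicit Defensive.
Import Order.TTheory GRing.Theory Num.Theory.
Local Open Scope ring_scope.

Section RankBounds.
Variable F : fieldType.

Lemma mxrank_mxsub m n m' n' (f : 'I_m' -> 'I_m) (g : 'I_n' -> 'I_n)
    (A : 'M[F]_(m, n)) :
  (\rank (mxsub f g A) <= \rank A)%N.
Proof.
have -> : mxsub f g A = rowsub f 1%:M *m A *m colsub g 1%:M.
  by rewrite mulmx_colsub mulmx1 -rowsubE; apply/matrixP => i j; rewrite !mxE.
exact: leq_trans (mxrankM_maxl _ _) (mxrankM_maxr _ _).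
Qed.

Lemma mxrank_const_mx m n (a : F) : (\rank (const_mx a : 'M[F]_(m, n)) <= 1)%N.
Proof.
have -> : const_mx a = (const_mx a : 'M_(m, 1)) *m (const_mx 1 : 'M_(1, n)).
  by apply/matrixP => i j; rewrite !mxE big_ord1 !mxE mulr1.
exact: leq_trans (mxrankM_maxr _ _) (rank_leq_row _).
Qed.

Lemma mxrank_addr_const_mx m n (A : 'M[F]_(m, n)) (a : F) :
  (\rank A <= (\rank (A + const_mx a)%R).+1)%N.
Proof.
have split_A : A = (A + const_mx a) + const_mx (- a).
  by apply/matrixP => i j; rewrite !mxE addrK.
rewrite {1}split_A -addn1; apply: leq_trans (mxrank_add _ _) _.
exact: leq_add (leqnn _) (mxrank_const_mx _ _ _).
Qed.

Lemma mxrank_scalar_add_const n (x t : F) :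
  x != 0 -> (n.-1 <= \rank (x%:M + const_mx t : 'M[F]_n)%R)%N.
Proof.
move=> x_neq0; have := mxrank_addr_const_mx (x%:M : 'M[F]_n) t.
by rewrite -scalemx1 mxrank_scale_nz // mxrank1; lia.
Qed.

Definition centering_mx k : 'M[F]_k := 1%:M - const_mx (k%:R)^-1.

Lemma mxrank_centering_mx k :
  (k%:R : F) != 0 -> (\rank (centering_mx k) <= k.-1)%N.
Proof.
move=> k_neq0; have k_gt0 : (0 < k)%N by case: k k_neq0; rewrite ?eqxx.
have ones_ker : ((const_mx 1%R : 'rV[F]_k) <= kermx (centering_mx k))%MS.
  apply/sub_kermxP; rewrite mulmxBr mulmx1.
  apply/matrixP => i j; rewrite !mxE.
  under eq_bigr do rewrite !mxE mul1r.
  by rewrite sumr_const card_ord -[_ *+ k]mulr_natr mulVf ?subrr.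
have ones_neq0 : (0 < \rank (const_mx 1%R : 'rV[F]_k))%N.
  rewrite lt0n mxrank_eq0; apply/eqP => /matrixP /(_ 0 (Ordinal k_gt0)).
  by rewrite !mxE => /eqP; rewrite oner_eq0.
have := leq_trans ones_neq0 (mxrankS ones_ker).
rewrite mxrank_ker; lia.
Qed.

End RankBounds.

Section UniversalRank.
Variables (R : realType) (N : nat).
Implicit Types (e : rel 'I_N) (a b c d : R).

Lemma mur_eqP e r a0 b0 c0 d0 :
  a0 != 0 -> (\rank (univ_adjmx e a0 b0 c0 d0) <= r)%N ->
  (forall a b c d, a != 0 -> (r <= \rank (univ_adjmx e a b c d))%N) ->
  mur_eq R e r.
Proof.
move=> a0_neq0 rank_le rank_ge; split=> //.
exists a0, b0, c0, d0; split=> //.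
by apply/eqP; rewrite eqn_leq rank_le rank_ge.
Qed.

Lemma univ_adjmxE e a b c d u v :
  univ_adjmx e a b c d u v =
  a * (e u v)%:R + b *+ (u == v) + c + d * ((#|[set j | e u j]|)%:R *+ (u == v)).
Proof. by rewrite /univ_adjmx /adjmx /degmx !mxE mulr1. Qed.

Lemma univ_adjmx_offdiag e a b c d u v :
  u != v -> univ_adjmx e a b c d u v = a * (e u v)%:R + c.
Proof. by move/negbTE=> uv; rewrite univ_adjmxE uv !mulr0n mulr0 !addr0. Qed.

Variables (k : nat) (p : 'I_N -> 'I_k).

Lemma univ_union_cliques_centering :
  univ_adjmx (union_cliques p) 1 1 (- (k%:R)^-1) 0 = mxsub p p (centering_mx R k).
Proof.
apply/matrixP => u v; rewrite univ_adjmxE !mxE /union_cliques.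
case: (eqVneq u v) => [->|_] /=; first by rewrite eqxx /=; ring.
by case: (p u == p v) => /=; ring.
Qed.

Lemma univ_complete_multipartite_centering :
  univ_adjmx (complete_multipartite p) (-1) 0 (1 - (k%:R)^-1) 0 =
  mxsub p p (centering_mx R k).
Proof.
apply/matrixP => u v; rewrite univ_adjmxE !mxE /complete_multipartite.
by case: (p u == p v); case: (u == v) => /=; ring.
Qed.

Hypothesis k_gt0 : (0 < k)%N.

Lemma mxrank_univ_blowup e a b c d :
  univ_adjmx e a b c d = mxsub p p (centering_mx R k) ->
  (\rank (univ_adjmx e a b c d) <= k.-1)%N.
Proof.
move=> ->; apply: leq_trans (mxrank_mxsub _ _ _) (mxrank_centering_mx _).
by rewrite pnatr_eq0 -lt0n.
Qed.

Hypothesis parts_gt1 : forall i, (1 < #|[set v | p v == i]|)%N.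

Lemma exists_part_pairs :
  exists r s : 'I_k -> 'I_N, forall i j, p (r i) = i /\ p (s j) = j /\ r i != s j.
Proof.
have pair_in_part i : exists x : 'I_N * 'I_N, [/\ p x.1 = i, p x.2 = i & x.1 != x.2].
  have /card_gt1P [x [y [x_i y_i xy]]] := parts_gt1 i.
  by exists (x, y); rewrite !inE in x_i y_i; split=> //; apply/eqP.
have [f f_pair] := fin_all_exists pair_in_part.
exists (fun i => (f i).1), (fun j => (f j).2) => i j.
have [ri _ rs] := f_pair i; have [_ sj _] := f_pair j.
split=> //; split=> //; case: (eqVneq i j) => [<- //|ij].
by apply: contra ij => /eqP/(congr1 p); rewrite ri sj => ->.
Qed.

Lemma mxrank_univ_parts e (x : R -> R) (t : R -> R -> R) :
  (forall a, a != 0 -> x a != 0) ->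
  (forall a c u v, p u != p v -> a * (e u v)%:R + c = t a c) ->
  (forall a c u v, p u = p v -> u != v -> a * (e u v)%:R + c = x a + t a c) ->
  forall a b c d, a != 0 -> (k.-1 <= \rank (univ_adjmx e a b c d))%N.
Proof.
move=> x_neq0 e_out e_in a b c d a_neq0.
have [r [s rs]] := exists_part_pairs.
have sub_rs : mxsub r s (univ_adjmx e a b c d) = (x a)%:M + const_mx (t a c).
  apply/matrixP => i j; have [ri [sj rs_ij]] := rs i j.
  rewrite [LHS]mxE univ_adjmx_offdiag // !mxE; case: eqVneq => [ij|ij] /=.
    by rewrite e_in // ri sj ij.
  by rewrite mulr0n add0r e_out // ri sj.
apply: leq_trans (mxrank_mxsub r s _).
by rewrite sub_rs mxrank_scalar_add_const // x_neq0.
Qed.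

Lemma mur_union_cliques : mur_eq R (union_cliques p) k.-1.
Proof.
apply: (mur_eqP (a0 := 1) (b0 := 1) (c0 := - (k%:R)^-1) (d0 := 0)).
- exact: oner_neq0.
- exact/mxrank_univ_blowup/univ_union_cliques_centering.
apply: (mxrank_univ_parts (x := id) (t := fun _ c => c)) => // a c u v.
  by rewrite /union_cliques => /negbTE ->; rewrite andbF mulr0 add0r.
by rewrite /union_cliques => -> ->; rewrite eqxx mulr1.
Qed.

Lemma mur_complete_multipartite : mur_eq R (complete_multipartite p) k.-1.
Proof.
apply: (mur_eqP (a0 := -1) (b0 := 0) (c0 := 1 - (k%:R)^-1) (d0 := 0)).
- by rewrite oppr_eq0 oner_eq0.
- exact/mxrank_univ_blowup/univ_complete_multipartite_centering.
apply: (mxrank_univ_parts (x := -%R) (t := fun a c => a + c)).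
- by move=> a; rewrite oppr_eq0.
- by move=> a c u v; rewrite /complete_multipartite => ->; rewrite mulr1.
by move=> a c u v; rewrite /complete_multipartite => -> _; rewrite eqxx /=; ring.
Qed.

End UniversalRank.

Theorem theorem25 (R : realType) (k : nat) (n : 'I_k -> nat) (N : nat)
  (p : 'I_N -> 'I_k) :
  (0 < k)%N ->
  (forall i, (1 < n i)%N) ->
  (forall i, #|[set v | p v == i]| = n i) ->
  mur_eq R (union_cliques p) k.-1 /\ mur_eq R (complete_multipartite p) k.-1.
Proof.
move=> k_gt0 n_gt1 part_size.
have parts_gt1 i : (1 < #|[set v | p v == i]|)%N by rewrite part_size.
by split; [apply: mur_union_cliques | apply: mur_complete_multipartite].
Qed.
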